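(* Let $m>n>0$ be relatively prime integers. Define $f_1(m,n)=(2m-n,m)$, $f_2(m,n)=(2m+n,m)$, $f_3(m,n)=(2n+m,n)$ and $g_1(u,v)=(-v,u+2v)$, $g_2(u,v)=(v,u-2v)$, $g_3(u,v)=(u,v-2u)$. Then for each $i\in\{1,2,3\}$, except in the single case $(m,n)=(2,1)$ and $i=1$, one has $$\beta(f_i(m,n))=g_i(\beta(m,n)).$$
   Context: For relatively prime integers $a>b>0$, the Bézout coefficients $\beta(a,b)$ are defined via the Euclidean algorithm $a=q_1b+r_1$, $b=q_2r_1+r_2$, $\dots$, $r_{k-2}=q_kr_{k-1}+r_k$ with $r_{k-1}=1$, $r_k=0$ (where $r_{-1}=a$, $r_0=b$): writing $\begin{pmatrix}a\\ b\end{pmatrix}=M\begin{pmatrix}1\\0\end{pmatrix}$ with $M=\begin{pmatrix}q_1&1\\1&0\end{pmatrix}\cdots\begin{pmatrix}q_k&1\\1&0\end{pmatrix}$, $\beta(a,b)=(r,s)$ is the first row of $M^{-1}$, so $ra+sb=1$. (Note each $f_i(m,n)$ again consists of relatively prime integers with first entry larger than second, both positive.) *)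

From HB Require Import structures.
From mathcomp Require Import all_boot all_order all_algebra.
Set Implicit Arguments. Unset Strict Implicit. Unset Printing Implicit Defensive.
Import GRing.Theory Num.Theory.
Local Open Scope ring_scope.

(* Quotients q_1, ..., q_k of the Euclidean algorithm on (a, b):
   a = q_1 b + r_1, b = q_2 r_1 + r_2, ..., stopping when the remainder is 0.
   [fuel] bounds the number of steps; fuel >= b suffices since the second
   argument strictly decreases. *)
Fixpoint euclid_quots (fuel a b : nat) : seq nat :=
  match fuel with
  | 0 => [::]
  | fuel'.+1 => if b == 0%N then [::] else (a %/ b)%N :: euclid_quots fuel' b (a %% b)
  end.

Definition qmat (q : nat) : 'M[int]_2 :=
  \matrix_(i < 2, j < 2)
    if ((i : nat) == 0%N) && ((j : nat) == 0%N) then q%:Z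
    else if ((i : nat) == 0%N) || ((j : nat) == 0%N) then 1 else 0.

(* M = (q_1 1; 1 0) ... (q_k 1; 1 0), so (a, b)^T = M (1, 0)^T *)
Definition euclid_mx (a b : nat) : 'M[int]_2 :=
  \prod_(q <- euclid_quots b a b) qmat q.

Definition idx1 : 'I_2 := @Ordinal 2 1 isT.

(* Bezout coefficients beta(a, b) = first row of M^{-1} *)
Definition beta (a b : nat) : int * int :=
  let Mi := invmx (euclid_mx a b) in (Mi ord0 ord0, Mi ord0 idx1).

Definition f1 (m n : nat) : nat * nat := (2 * m - n, m)%N.
Definition f2 (m n : nat) : nat * nat := (2 * m + n, m)%N.
Definition f3 (m n : nat) : nat * nat := (2 * n + m, n)%N.

Definition g1 (p : int * int) : int * int := (- p.2, p.1 + 2 * p.2).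
Definition g2 (p : int * int) : int * int := (p.2, p.1 - 2 * p.2).
Definition g3 (p : int * int) : int * int := (p.1, p.2 - 2 * p.1).

Definition beta_pair (p : nat * nat) : int * int := beta p.1 p.2.

From mathcomp Require Import all_boot all_order all_algebra zify ring.
Set Implicit Arguments. Unset Strict Implicit. Unset Printing Implicit Defensive.
Import GRing.Theory Num.Theory.
Local Open Scope ring_scope.

(* For each i there is a fixed unimodular matrix T_i with
   M(f_i(m,n)) = T_i M(m,n), where M(a,b) is the Euclid matrix; then
   beta(f_i(m,n)) is the first row of M(m,n)^-1 T_i^-1, and g_i is right
   multiplication by T_i^-1.  On the quotient sequence (q_1, q_2, ...) of
   (m, n), f_2 prepends the quotient 2 and f_3 replaces q_1 by q_1 + 2.
   For f_1 the quotient sequence (q_1, q_2, ...) becomes (1, 1, q_1 - 1, q_2, ...)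
   if q_1 >= 2 and (1, q_2 + 1, q_3, ...) if q_1 = 1; the first rule breaks down
   when m = 2n, which for coprime m, n is the exceptional case (2, 1). *)

Lemma euclid_quots_fuel (fuel1 fuel2 a b : nat) :
  (b <= fuel1)%N -> (b <= fuel2)%N ->
  euclid_quots fuel1 a b = euclid_quots fuel2 a b.
Proof.
elim: fuel1 fuel2 a b => [|fuel1 IH] [|fuel2] a b //= le1 le2.
- by have -> : b = 0%N by lia.
- by have -> : b = 0%N by lia.
case: eqP => // /eqP b_neq0; congr (_ :: _).
have ltab : (a %% b < b)%N by rewrite ltn_mod lt0n.
by apply: IH; lia.
Qed.

Lemma euclid_mx_step (a b q r : nat) :
  (r < b)%N -> a = (q * b + r)%N -> euclid_mx a b = qmat q *m euclid_mx b r.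
Proof.
move=> ltrb ->; case: b ltrb => [//|b] ltrb.
rewrite /euclid_mx /= divnMDl // divn_small // addn0 modnMDl modn_small //.
by rewrite big_cons mulmxE; congr (_ * \big[_/_]_(_ <- _) _); apply: euclid_quots_fuel.
Qed.

Definition mx2 (a b c d : int) : 'M[int]_2 :=
  \matrix_(i < 2, j < 2)
    if (i : nat) == 0%N then (if (j : nat) == 0%N then a else b)
    else (if (j : nat) == 0%N then c else d).

Lemma mx2_mul (a b c d a' b' c' d' : int) :
  mx2 a b c d *m mx2 a' b' c' d'
  = mx2 (a * a' + b * c') (a * b' + b * d') (c * a' + d * c') (c * b' + d * d').
Proof.
by apply/matrixP => -[[|[|i]] ?] -[[|[|j]] ?] //; rewrite !mxE big_ord_recl big_ord1 !mxE.
Qed.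

Lemma mx2_1 : 1%:M = mx2 1 0 0 1.
Proof. by apply/matrixP => -[[|[|i]] ?] -[[|[|j]] ?] //; rewrite !mxE. Qed.

Lemma qmat_mx2 (q : nat) : qmat q = mx2 q 1 1 0.
Proof. by apply/matrixP => -[[|[|i]] ?] -[[|[|j]] ?] //; rewrite !mxE. Qed.

Lemma qmatD (q p : nat) : qmat (q + p) = mx2 1 q 0 1 *m qmat p.
Proof. by rewrite !qmat_mx2 mx2_mul; congr mx2; lia. Qed.

Lemma qmat_unitmx (q : nat) : qmat q \in unitmx.
Proof.
have qmatK : qmat q *m mx2 0 1 1 (- q%:Z) = 1%:M.
  by rewrite qmat_mx2 mx2_mul mx2_1; congr mx2; ring.
by case: (mulmx1_unit qmatK).
Qed.

Lemma euclid_mx_unitmx (a b : nat) : euclid_mx a b \in unitmx.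
Proof.
rewrite /euclid_mx; apply: (big_ind (fun A : 'M[int]_2 => A \in unitmx)).
- exact: unitmx1.
- by move=> A B; rewrite -mulmxE unitmx_mul => -> ->.
by move=> q _; apply: qmat_unitmx.
Qed.

Lemma invmx_mul_rinv (R : comUnitRingType) (n : nat) (T Ti M : 'M[R]_n) :
  T *m Ti = 1%:M -> M \in unitmx -> invmx (T *m M) = invmx M *m Ti.
Proof.
move=> TTi M_unit; have [T_unit _] := mulmx1_unit TTi.
have TM_unit : T *m M \in unitmx by rewrite unitmx_mul T_unit.
have TM_rinv : (T *m M) *m (invmx M *m Ti) = 1%:M.
  by rewrite mulmxA -(mulmxA T) mulmxV // mulmx1 TTi.
by rewrite -[LHS]mulmx1 -TM_rinv mulmxA mulVmx // mul1mx.
Qed.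

Lemma beta_mulmx (T Ti : 'M[int]_2) (a b c d : nat) :
  T *m Ti = 1%:M -> T *m euclid_mx a b = euclid_mx c d ->
  beta c d = ((beta a b).1 * Ti ord0 ord0 + (beta a b).2 * Ti idx1 ord0,
              (beta a b).1 * Ti ord0 idx1 + (beta a b).2 * Ti idx1 idx1).
Proof.
move=> TTi TM; rewrite /beta -TM (invmx_mul_rinv TTi (euclid_mx_unitmx a b)).
rewrite !mxE !big_ord_recl !big_ord0 !addr0.
by have -> : lift ord0 ord0 = idx1 :> 'I_2 by apply: val_inj.
Qed.

Definition f1_mx : 'M[int]_2 := mx2 2 (-1) 1 0.

Lemma f1_mx_shear : f1_mx *m mx2 1 1 0 1 = qmat 1 *m qmat 1.
Proof. by rewrite /f1_mx !qmat_mx2 !mx2_mul. Qed.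

Lemma f1_mx_qmat1 : f1_mx *m qmat 1 = qmat 1 *m mx2 1 1 0 1.
Proof. by rewrite /f1_mx !qmat_mx2 !mx2_mul. Qed.

Lemma euclid_mx_f1 (m n : nat) : (0 < n)%N -> (n < m)%N -> m != n.*2 ->
  f1_mx *m euclid_mx m n = euclid_mx (2 * m - n) m.
Proof.
move=> n_gt0 ltnm m_neq2n; have := divn_eq m n; have := ltn_pmod m n_gt0.
move: (m %/ n)%N (m %% n)%N => q r ltrn Em.
rewrite (@euclid_mx_step m n q r) //.
case: q Em => [|[|q]] Em; first lia.
- have r_gt0 : (0 < r)%N by lia.
  have := divn_eq n r; have := ltn_pmod n r_gt0.
  move: (n %/ r)%N (n %% r)%N => q' r' ltr'r En.
  rewrite (@euclid_mx_step (2 * m - n) m 1 r) ?(@euclid_mx_step m r q'.+1 r');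
    rewrite ?(@euclid_mx_step n r q' r') //; try lia.
  by rewrite -[q'.+1]add1n qmatD !mulmxA f1_mx_qmat1.
- rewrite (@euclid_mx_step (2 * m - n) m 1 (m - n)) ?(@euclid_mx_step m (m - n) 1 n);
    rewrite ?(@euclid_mx_step (m - n) n q.+1 r) //; try lia.
  by rewrite -[q.+2]add1n qmatD !mulmxA f1_mx_shear.
Qed.

Lemma beta_f1 (m n : nat) : (0 < n)%N -> (n < m)%N -> m != n.*2 ->
  beta_pair (f1 m n) = g1 (beta m n).
Proof.
move=> n_gt0 ltnm m_neq2n.
rewrite /beta_pair /= (@beta_mulmx f1_mx (mx2 0 1 (-1) 2) m n).
- by rewrite /g1 !mxE /=; congr pair; ring.
- by rewrite /f1_mx mx2_mul mx2_1.
exact: euclid_mx_f1 n_gt0 ltnm m_neq2n.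
Qed.

Lemma beta_f2 (m n : nat) : (n < m)%N -> beta_pair (f2 m n) = g2 (beta m n).
Proof.
move=> ltnm; rewrite /beta_pair /= (@beta_mulmx (qmat 2) (mx2 0 1 1 (-2)) m n).
- by rewrite /g2 !mxE /=; congr pair; ring.
- by rewrite qmat_mx2 mx2_mul mx2_1.
by rewrite (@euclid_mx_step _ m 2 n) //; lia.
Qed.

Lemma beta_f3 (m n : nat) : (0 < n)%N -> beta_pair (f3 m n) = g3 (beta m n).
Proof.
move=> n_gt0; rewrite /beta_pair /= (@beta_mulmx (mx2 1 2 0 1) (mx2 1 (-2) 0 1) m n).
- by rewrite /g3 !mxE /=; congr pair; ring.
- by rewrite mx2_mul mx2_1.
have := divn_eq m n; have := ltn_pmod m n_gt0.
move: (m %/ n)%N (m %% n)%N => q r ltrn Em.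
rewrite (@euclid_mx_step m n q r) ?(@euclid_mx_step _ n (2 + q) r) //; last lia.
by rewrite qmatD mulmxA.
Qed.

Theorem theorem1p5 (m n : nat) :
  (0 < n)%N -> (n < m)%N -> coprime m n ->
  [/\ (m, n) <> (2%N, 1%N) -> beta_pair (f1 m n) = g1 (beta m n),
      beta_pair (f2 m n) = g2 (beta m n)
    & beta_pair (f3 m n) = g3 (beta m n)].
Proof.
move=> n_gt0 ltnm co_mn; split; [|exact: beta_f2|exact: beta_f3].
move=> mn_neq21; apply: beta_f1 => //; apply/eqP => m2n; apply: mn_neq21.
have n1 : n = 1%N by move: co_mn; rewrite m2n -mul2n /coprime gcdnC gcdnMl => /eqP.
by rewrite m2n n1.
Qed.
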